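(* The map $\varphi:\mathbb{C}S_\infty\to\mathbb{C}(BC*S_\infty)$ is injective.
   Context: $BC$ is the bicyclic monoid $\langle p,q : pq=e\rangle$ with involution $p^*=q$. $S_\infty$ is the free monoid on $\{t_n,t_n^*: n\in\mathbb{N}\}$ with involution $t_n\mapsto t_n^*$. $BC*S_\infty$ is the free product of monoids, with the involution $(s_1t_1\cdots s_nt_n)^*=t_n^*s_n^*\cdots t_1^*s_1^*$. For a monoid $S$ with involution, $\mathbb{C}S$ is the semigroup algebra with basis $\{\delta_s:s\in S\}$, $\delta_s\delta_t=\delta_{st}$, $\delta_s^*=\delta_{s^*}$. Fix a C*-norm $\|\cdot\|$ on $\mathbb{C}(BC*S_\infty)$ (i.e. a norm whose completion is a C*-algebra containing $\mathbb{C}(BC*S_\infty)$ as a $*$-subalgebra). Let $\gamma_n=(n\|\delta_{t_n}\|)^{-1}$ and $a_n=\delta_p+\gamma_n\delta_{t_n}$ for $n\in\mathbb{N}$, and let $\varphi:\mathbb{C}S_\infty\to\mathbb{C}(BC*S_\infty)$ be the unique unital $*$-homomorphism with $\varphi(\delta_{t_n})=a_n$ for all $n\in\mathbb{N}$. *)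

From mathcomp Require Import all_boot all_algebra.
From mathcomp Require Import reals.
From mathcomp.real_closed Require Import complex.
From mathcomp Require Import finmap monalg.

Set Implicit Arguments.
Unset Strict Implicit.
Unset Printing Implicit Defensive.

Import GRing.Theory Num.Theory.
Local Open Scope ring_scope.
Local Open Scope complex_scope.

(* The free monoid S_oo on {t_n, t_n^* : n in N}, N = {1,2,3,...}.     *)
(* A letter (i, false) stands for t_(i+1), (i, true) for t_(i+1)^*.   *)
Definition letterS := (nat * bool)%type.
Definition Sinf := seq letterS.
Definition Sinf_one : Sinf := [::].
Definition Sinf_mul (u v : Sinf) : Sinf := u ++ v.
Definition Sinf_star (u : Sinf) : Sinf :=
  rev (map (fun x : letterS => (x.1, ~~ x.2)) u).
Definition Sinf_t (i : nat) : Sinf := [:: (i, false)].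

(* The free product BC * S_oo.  Since S_oo is free, BC * S_oo is the   *)
(* monoid generated by p, q, t_n, t_n^* subject only to p q = e.  Its  *)
(* elements are represented by their normal forms: words in these     *)
(* letters containing no factor "p q".                                 *)
(* inl false = p, inl true = q, inr (i, b) as in letterS.              *)
Definition letter := (bool + nat * bool)%type.
Definition letter_star (x : letter) : letter :=
  match x with
  | inl b => inl (~~ b)
  | inr (i, b) => inr (i, ~~ b)
  end.

Definition push (x : letter) (w : seq letter) : seq letter :=
  match x, w with
  | inl false, inl true :: w' => w'
  | _, _ => x :: w
  end.
Definition reduce (w : seq letter) : seq letter := foldr push [::] w.

Fixpoint reducedb (w : seq letter) : bool :=
  match w with
  | [::] => true
  | x :: w' =>
      ~~ ((x == inl false) && (head (inl false) w' == inl true)) && reducedb w'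
  end.

Definition FP := {w : seq letter | reducedb w}.

Definition FP_one : FP := exist _ [::] erefl.
Definition FP_mul (u v : FP) : FP := insubd FP_one (reduce (val u ++ val v)).
Definition FP_star (u : FP) : FP := insubd FP_one (rev (map letter_star (val u))).
Definition FP_p : FP := insubd FP_one [:: inl false].
Definition FP_q : FP := insubd FP_one [:: inl true].
Definition FP_t (i : nat) : FP := insubd FP_one [:: inr (i, false)].

Definition CA (R : realType) (S : choiceType) := {malg R[i][S]}.

Definition delta (R : realType) (S : choiceType) (s : S) : CA R S := << s >>.

Definition amul (R : realType) (S : choiceType) (m : S -> S -> S)
    (f g : CA R S) : CA R S :=
  \sum_(u <- msupp f) \sum_(v <- msupp g) << f@_u * g@_v *g m u v >>.

Definition astar (R : realType) (S : choiceType) (st : S -> S)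
    (f : CA R S) : CA R S :=
  \sum_(u <- msupp f) << (f@_u)^* *g st u >>.

Definition is_unital_star_hom (R : realType) (S T : choiceType)
    (mS : S -> S -> S) (sS : S -> S) (oneS : S)
    (mT : T -> T -> T) (sT : T -> T) (oneT : T)
    (phi : CA R S -> CA R T) : Prop :=
  (forall (c : R[i]) f g, phi (c *: f + g) = c *: phi f + phi g) /\
  (forall f g, phi (amul mS f g) = amul mT (phi f) (phi g)) /\
  phi (delta R oneS) = delta R oneT /\
  (forall f, phi (astar sS f) = astar sT (phi f)).

(* C*-norm on CT: a norm that is submultiplicative and satisfies the
   C*-identity (equivalently, its completion is a C*-algebra containing
   CT as a *-subalgebra). *)
Definition is_Cstar_norm (R : realType) (T : choiceType)
    (mT : T -> T -> T) (sT : T -> T) (nrm : CA R T -> R) : Prop :=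
  (forall x, 0 <= nrm x) /\
  (forall x, nrm x = 0 -> x = 0) /\
  (forall x y, nrm (x + y) <= nrm x + nrm y) /\
  (forall (c : R[i]) x, (nrm (c *: x))%:C = `|c| * (nrm x)%:C) /\
  (forall x y, nrm (amul mT x y) <= nrm x * nrm y) /\
  (forall x, nrm (amul mT (astar sT x) x) = nrm x ^+ 2).

Definition gamma (R : realType) (nrm : CA R FP -> R) (i : nat) : R :=
  ((i.+1)%:R * nrm (delta R (FP_t i)))^-1.

Definition a_gen (R : realType) (nrm : CA R FP -> R) (i : nat) : CA R FP :=
  delta R FP_p + (gamma nrm i)%:C *: delta R (FP_t i).

From mathcomp Require Import all_boot all_algebra.
From mathcomp Require Import reals.
From mathcomp.real_closed Require Import complex.
From mathcomp Require Import finmap monalg.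

(* The map is triangular with respect to word length.  Expanding
   phi(delta_w) = a_(w_1) ... a_(w_k) (with a_n^* for starred letters), the
   word w itself, read in BC * S_oo, occurs with coefficient a product of
   gamma's and their conjugates, which is nonzero; every word u occurring is
   no longer than w and its S_oo-letters form a subsequence of w, because
   reducing p q only deletes BC-letters.  So if w' occurs in phi(delta_w) and
   |w| <= |w'|, then w' = w.  For h <> 0 take w of maximal length in the
   support of h: the coefficient of w in phi(h) is h_w times the leading
   coefficient of phi(delta_w), hence nonzero.  The C*-norm only serves to
   make gamma_n well defined and nonzero. *)

Set Implicit Arguments.
Unset Strict Implicit.
Unset Printing Implicit Defensive.

Import GRing.Theory Num.Theory.
Local Open Scope ring_scope.
Local Open Scope complex_scope.

Lemma monalgU_scale (K : nzRingType) (S : choiceType) (c : K) (s : S) :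
  << c *g s >> = c *: << s >>.
Proof. by apply/malgP => k; rewrite mcoeffZ !mcoeffU mulr_natr. Qed.

Section Triangular.
Variables (K : idomainType) (S T : choiceType).
Variable L : {malg K[S]} -> {malg K[T]}.
Hypothesis L_linear : forall c f g, L (c *: f + g) = c *: L f + L g.
Variables (lead : S -> T) (rank : S -> nat).
Hypothesis lead_neq0 : forall s, (L << s >>)@_(lead s) != 0.
Hypothesis lead_unique :
  forall s s', lead s' \in msupp (L << s >>) -> (rank s <= rank s')%N -> s' = s.

Let L0 : L 0 = 0.
Proof.
by apply: (addrI (L 0)); rewrite addr0 -{1}(scale1r (L 0)) -L_linear scale1r addr0.
Qed.

Let LD f g : L (f + g) = L f + L g.
Proof. by rewrite -[f in LHS]scale1r L_linear scale1r. Qed.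

Let LZ c f : L (c *: f) = c *: L f.
Proof. by rewrite -[_ *: f]addr0 L_linear L0 addr0. Qed.

Lemma triangular_kernel h : L h = 0 -> h = 0.
Proof.
move=> Lh0; apply/malgP => s1; rewrite mcoeff0; apply/eqP; rewrite mcoeff_eq0.
apply/negP => s1_in.
have [s0 s0_in s0_max] :
    exists2 s0, s0 \in msupp h & {in msupp h, forall s, (rank s <= rank s0)%N}.
  have [s _ s_max] := arg_maxnP (fun s : msupp h => rank (val s))
                                (erefl true : [` s1_in]%fset \in predT).
  by exists (val s) => [|s' s'_in]; [exact: valP | exact: (s_max [` s'_in]%fset)].
have : (L h)@_(lead s0) = h@_s0 * (L << s0 >>)@_(lead s0).
  rewrite {1}(monalgE h) (big_morph L LD L0) raddf_sum.
  rewrite (bigD1_seq s0) ?fset_uniq //= big1_seq ?addr0 => [|s /andP[s_neq0 s_in]];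
    rewrite monalgU_scale LZ mcoeffZ //.
  apply/eqP; rewrite mulf_eq0; apply/orP; right; rewrite mcoeff_eq0.
  apply/negP => lead_in.
  by move: s_neq0; rewrite (lead_unique lead_in (s0_max s s_in)) eqxx.
rewrite Lh0 mcoeff0 => /esym/eqP; rewrite mulf_eq0 mcoeff_eq0 s0_in /=.
by rewrite (negPf (lead_neq0 s0)).
Qed.

Lemma triangular_injective : injective L.
Proof.
move=> f g Lfg; apply/eqP; rewrite -subr_eq0; apply/eqP/triangular_kernel.
by rewrite addrC -scaleN1r L_linear Lfg scaleN1r addNr.
Qed.
End Triangular.

Section SemigroupAlgebra.
Variables (R : realType) (S : choiceType).
Implicit Types (f g : CA R S).

Lemma amul_coef (m : S -> S -> S) f g z :
  (amul m f g)@_z =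
  \sum_(u <- msupp f) \sum_(v <- msupp g) (f@_u * g@_v) *+ (m u v == z).
Proof.
rewrite /amul (big_morph _ (mcoeffD z) (mcoeff0 z)); apply: eq_bigr => u _.
by rewrite (big_morph _ (mcoeffD z) (mcoeff0 z)); apply: eq_bigr => v _; rewrite mcoeffU.
Qed.

Lemma astar_coef (st : S -> S) f z :
  (astar st f)@_z = \sum_(u <- msupp f) (f@_u)^* *+ (st u == z).
Proof.
rewrite /astar (big_morph _ (mcoeffD z) (mcoeff0 z)).
by apply: eq_bigr => u _; rewrite mcoeffU.
Qed.

Lemma msupp_amul (m : S -> S -> S) f g :
  (msupp (amul m f g) `<=` [fset m u v | u in msupp f, v in msupp g])%fset.
Proof.
apply/fsubsetP => z; rewrite -mcoeff_neq0 amul_coef; apply: contraNT => z_notin.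
rewrite big1_seq // => u /= u_in; rewrite big1_seq // => v /= v_in.
by case: eqP => // uv_z; rewrite -uv_z in_imfset2 in z_notin.
Qed.

Lemma msupp_astar (st : S -> S) f :
  (msupp (astar st f) `<=` [fset st u | u in msupp f])%fset.
Proof.
apply/fsubsetP => z; rewrite -mcoeff_neq0 astar_coef; apply: contraNT => z_notin.
rewrite big1_seq // => u /= u_in.
by case: eqP => // u_z; rewrite -u_z in_imfset in z_notin.
Qed.

Lemma amul_delta (m : S -> S -> S) s t :
  amul m (delta R s) (delta R t) = delta R (m s t).
Proof. by rewrite /amul /delta !msuppU oner_eq0 !big_seq_fset1 !mcoeffUU mulr1. Qed.

Lemma astar_delta (st : S -> S) s : astar st (delta R s) = delta R (st s).
Proof. by rewrite /astar /delta msuppU oner_eq0 big_seq_fset1 mcoeffUU rmorph1. Qed.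

Lemma amul_coef_unique (m : S -> S -> S) f g x y :
  x \in msupp f -> y \in msupp g ->
  {in msupp f & msupp g, forall u v, m u v = m x y -> u = x /\ v = y} ->
  (amul m f g)@_(m x y) = f@_x * g@_y.
Proof.
move=> x_in y_in uniq_xy; rewrite amul_coef (bigD1_seq x) ?fset_uniq //=.
rewrite (bigD1_seq y) ?fset_uniq //= eqxx mulr1n.
rewrite big1_seq ?addr0 => [|v /andP[v_neq v_in]].
  rewrite big1_seq ?addr0 // => u /andP[u_neq u_in].
  rewrite big1_seq // => v v_in; case: eqP => // /(uniq_xy _ _ u_in v_in)[u_x].
  by rewrite u_x eqxx in u_neq.
by case: eqP => // /(uniq_xy _ _ x_in v_in)[_ v_y]; rewrite v_y eqxx in v_neq.
Qed.

Lemma astar_coef_inj (st : S -> S) f x :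
  {in msupp f, forall u, st u = st x -> u = x} ->
  (astar st f)@_(st x) = (f@_x)^*.
Proof.
move=> inj_x; rewrite astar_coef.
have [x_in|x_notin] := boolP (x \in msupp f).
  rewrite (bigD1_seq x) ?fset_uniq //= eqxx mulr1n big1_seq ?addr0 // => u.
  case/andP=> u_neq u_in; case: eqP => // /(inj_x _ u_in) u_x.
  by rewrite u_x eqxx in u_neq.
rewrite (mcoeff_outdom x_notin) rmorph0 big1_seq // => u /= u_in.
by case: eqP => // /(inj_x _ u_in) u_x; rewrite -u_x u_in in x_notin.
Qed.

Lemma mcoeff_delta_addZ (x y : S) (c : R[i]) :
  x != y -> (delta R x + c *: delta R y)@_y = c.
Proof.
move=> x_neq_y; rewrite mcoeffD mcoeffZ /delta !mcoeffU (negPf x_neq_y) eqxx.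
by rewrite add0r mulr1.
Qed.

Lemma msupp_delta_addZ (x y : S) (c : R[i]) u :
  u \in msupp (delta R x + c *: delta R y) -> u = x \/ u = y.
Proof.
move=> /(fsubsetP (msuppD_le _ _)); rewrite inE => /orP[].
  by rewrite /delta msuppU oner_eq0 inE => /eqP; left.
by move=> /(fsubsetP (msuppZ_le _ _)); rewrite /delta msuppU oner_eq0 inE => /eqP; right.
Qed.
End SemigroupAlgebra.

Definition Sinf_letter (x : letter) : option letterS :=
  if x is inr y then Some y else None.

Definition eraseBC (w : seq letter) : Sinf := pmap Sinf_letter w.

Definition FP_of_Sinf (w : Sinf) : FP := insubd FP_one (map inr w).

Lemma reducedb_push x w : reducedb w -> reducedb (push x w).
Proof. by case: x => [[]|[i b]] //=; case: w => [|[[]|[j c]] w] //= /andP[]. Qed.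

Lemma reducedb_reduce w : reducedb (reduce w).
Proof. by elim: w => //= x w; apply: reducedb_push. Qed.

Lemma reducedb_map_inr w : reducedb (map inr w).
Proof. by elim: w. Qed.

Lemma reduce_map_inr w : reduce (map inr w) = map inr w.
Proof. by elim: w => //= x w ->. Qed.

Lemma size_push x w : (size (push x w) <= (size w).+1)%N.
Proof. by case: x => [[]|[i b]] //; case: w => [|[[]|[j c]] w] //=; rewrite leqW. Qed.

Lemma size_reduce w : (size (reduce w) <= size w)%N.
Proof. by elim: w => //= x w IH; rewrite (leq_trans (size_push _ _)). Qed.

Lemma eraseBC_push x w : eraseBC (push x w) = eraseBC (x :: w).
Proof. by case: x => [[]|[i b]] //; case: w => [|[[]|[j c]] w]. Qed.

Lemma eraseBC_reduce w : eraseBC (reduce w) = eraseBC w.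
Proof. by elim: w => //= x w IH; rewrite eraseBC_push /eraseBC /= -/(eraseBC _) IH. Qed.

Lemma eraseBC_map_inr w : eraseBC (map inr w) = w.
Proof. by elim: w => //= x w IH; rewrite /eraseBC /= -/(eraseBC _) IH. Qed.

Lemma eraseBC_full w : (size w <= size (eraseBC w))%N -> w = map inr (eraseBC w).
Proof.
elim: w => //= -[b|y] w IH /=; rewrite /eraseBC /= -/(eraseBC w).
  by rewrite ltnNge /eraseBC size_pmap count_size.
by rewrite ltnS => /IH {1}->.
Qed.

Lemma val_FP_mul u v : val (FP_mul u v) = reduce (val u ++ val v).
Proof. by rewrite /FP_mul insubdK //; apply: reducedb_reduce. Qed.

Lemma val_FP_of_Sinf w : val (FP_of_Sinf w) = map inr w.
Proof. by rewrite /FP_of_Sinf insubdK //; apply: reducedb_map_inr. Qed.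

Lemma val_FP_p : val FP_p = [:: inl false].
Proof. by rewrite /FP_p insubdK. Qed.

Lemma val_FP_t i : val (FP_t i) = [:: inr (i, false)].
Proof. by rewrite /FP_t insubdK. Qed.

Lemma val_FP_star_p : val (FP_star FP_p) = [:: inl true].
Proof. by rewrite /FP_star val_FP_p insubdK. Qed.

Lemma val_FP_star_t i : val (FP_star (FP_t i)) = [:: inr (i, true)].
Proof. by rewrite /FP_star val_FP_t insubdK. Qed.

Lemma FP_p_neq_t i : FP_p != FP_t i.
Proof. by apply/eqP => /(congr1 val); rewrite val_FP_p val_FP_t. Qed.

Lemma eraseBC_FP_of_Sinf w : eraseBC (val (FP_of_Sinf w)) = w.
Proof. by rewrite val_FP_of_Sinf eraseBC_map_inr. Qed.

Lemma FP_of_Sinf_inj : injective FP_of_Sinf.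
Proof. by move=> w1 w2 /(congr1 (eraseBC \o val)) /=; rewrite !eraseBC_FP_of_Sinf. Qed.

Lemma eraseBC_FP_mul u v :
  eraseBC (val (FP_mul u v)) = eraseBC (val u) ++ eraseBC (val v).
Proof. by rewrite val_FP_mul eraseBC_reduce /eraseBC pmap_cat. Qed.

Lemma FP_mul_of_Sinf w1 w2 :
  FP_mul (FP_of_Sinf w1) (FP_of_Sinf w2) = FP_of_Sinf (w1 ++ w2).
Proof. by apply: val_inj; rewrite val_FP_mul !val_FP_of_Sinf -map_cat reduce_map_inr. Qed.

Definition below (w : Sinf) (u : FP) : bool :=
  (size (val u) <= size w)%N && subseq (eraseBC (val u)) w.

Lemma below_mul w1 w2 u v :
  below w1 u -> below w2 v -> below (w1 ++ w2) (FP_mul u v).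
Proof.
move=> /andP[size_u sub_u] /andP[size_v sub_v]; apply/andP; split.
  by rewrite val_FP_mul (leq_trans (size_reduce _)) // !size_cat leq_add.
by rewrite eraseBC_FP_mul cat_subseq.
Qed.

Lemma below_eq w u :
  below w u -> (size w <= size (eraseBC (val u)))%N -> u = FP_of_Sinf w.
Proof.
move=> /andP[size_u sub_u] size_w.
have erase_u : eraseBC (val u) = w.
  by apply/eqP; rewrite -(geq_leqif (size_subseq_leqif sub_u)) size_w.
by apply: val_inj; rewrite val_FP_of_Sinf -erase_u; apply: eraseBC_full; rewrite erase_u.
Qed.

Lemma below_mul_eq w1 w2 u v : below w1 u -> below w2 v ->
  FP_mul u v = FP_of_Sinf (w1 ++ w2) -> u = FP_of_Sinf w1 /\ v = FP_of_Sinf w2.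
Proof.
move=> below_u below_v /(congr1 (eraseBC \o val)) /=.
rewrite eraseBC_FP_mul eraseBC_FP_of_Sinf => /(congr1 size); rewrite !size_cat.
have := size_subseq (andP below_u).2; have := size_subseq (andP below_v).2.
move=> le_v le_u eq_size.
split; apply: below_eq => //.
  by rewrite -(leq_add2r (size w2)) -eq_size leq_add2l.
by rewrite -(leq_add2l (size w1)) -eq_size leq_add2r.
Qed.

Lemma below_of_Sinf w w' :
  below w (FP_of_Sinf w') -> (size w <= size w')%N -> w' = w.
Proof.
move=> below_w' le_w; apply: FP_of_Sinf_inj; apply: below_eq => //.
by rewrite eraseBC_FP_of_Sinf.
Qed.

Section LeadingTerm.
Variable R : realType.

Definition has_leading (w : Sinf) (F : CA R FP) : Prop :=
  F@_(FP_of_Sinf w) != 0 /\ {in msupp F, forall u, below w u}.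

Lemma has_leading_one : has_leading [::] (delta R FP_one).
Proof.
rewrite /has_leading (_ : FP_of_Sinf [::] = FP_one); last first.
  by apply: val_inj; rewrite val_FP_of_Sinf.
split; first by rewrite /delta mcoeffUU oner_eq0.
by move=> u; rewrite /delta msuppU oner_eq0 inE => /eqP ->.
Qed.

Lemma has_leading_mul w1 w2 F G :
  has_leading w1 F -> has_leading w2 G -> has_leading (w1 ++ w2) (amul FP_mul F G).
Proof.
move=> [F_lead F_below] [G_lead G_below]; split.
  rewrite -FP_mul_of_Sinf amul_coef_unique ?mulf_neq0 -?mcoeff_neq0 //.
  move=> u v u_in v_in; rewrite FP_mul_of_Sinf.
  by apply: below_mul_eq; [apply: F_below | apply: G_below].
move=> z /(fsubsetP (msupp_amul _ _ _)) /imfset2P[u u_in [v v_in ->]].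
by apply: below_mul; [apply: F_below | apply: G_below].
Qed.

Lemma has_leading_p_t (c : R[i]) i : c != 0 ->
  has_leading [:: (i, false)] (delta R FP_p + c *: delta R (FP_t i)).
Proof.
move=> c_neq0; split; first by rewrite mcoeff_delta_addZ ?FP_p_neq_t.
by move=> u /msupp_delta_addZ[] ->; rewrite /below /eraseBC ?val_FP_p ?val_FP_t /= ?eqxx.
Qed.

Lemma has_leading_star_p_t (c : R[i]) i : c != 0 ->
  has_leading [:: (i, true)] (astar FP_star (delta R FP_p + c *: delta R (FP_t i))).
Proof.
move=> c_neq0; split.
  rewrite (_ : FP_of_Sinf _ = FP_star (FP_t i)); last first.
    by apply: val_inj; rewrite val_FP_of_Sinf val_FP_star_t.
  rewrite astar_coef_inj => [|u /msupp_delta_addZ[] -> //].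
    by rewrite mcoeff_delta_addZ ?FP_p_neq_t // fmorph_eq0.
  by move/(congr1 val); rewrite val_FP_star_p val_FP_star_t.
move=> u /(fsubsetP (msupp_astar _ _)) /imfsetP[v /msupp_delta_addZ[] -> ->].
  by rewrite /below val_FP_star_p.
by rewrite /below /eraseBC val_FP_star_t /= eqxx.
Qed.
End LeadingTerm.

Lemma gamma_neq0 (R : realType) (nrm : CA R FP -> R) i :
  is_Cstar_norm FP_mul FP_star nrm -> (gamma nrm i)%:C != 0.
Proof.
move=> [_ [nrm_def _]]; rewrite fmorph_eq0 /gamma invr_eq0 mulf_neq0 ?pnatr_eq0 //.
by apply/eqP => /nrm_def /eqP; rewrite /delta monalgU_eq0 oner_eq0.
Qed.

Theorem corollary3p3 (R : realType) (nrm : CA R FP -> R)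
  (Hnrm : is_Cstar_norm FP_mul FP_star nrm)
  (phi : CA R Sinf -> CA R FP)
  (Hphi : is_unital_star_hom Sinf_mul Sinf_star Sinf_one
                             FP_mul FP_star FP_one phi)
  (Hgen : forall i : nat, phi (delta R (Sinf_t i)) = a_gen nrm i) :
  injective phi.
Proof.
have [phi_linear [phi_mul [phi_one phi_star]]] := Hphi.
have phi_delta_leading w : has_leading w (phi (delta R w)).
  elim: w => [|[j b] w IHw]; first by rewrite phi_one; apply: has_leading_one.
  rewrite -[_ :: _]/(Sinf_mul [:: (j, b)] w) -amul_delta phi_mul.
  apply: has_leading_mul IHw; case: b.
    rewrite -[[:: (j, true)]]/(Sinf_star (Sinf_t j)) -astar_delta phi_star Hgen.
    exact/has_leading_star_p_t/(gamma_neq0 j Hnrm).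
  by rewrite Hgen; exact/has_leading_p_t/(gamma_neq0 j Hnrm).
apply: (triangular_injective phi_linear (lead := FP_of_Sinf) (rank := size)).
  by move=> w; case: (phi_delta_leading w).
by move=> w w' /(phi_delta_leading w).2; apply: below_of_Sinf.
Qed.
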